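(* Let $w$ be a word of length $k$. Then for every $n > 2k$, $H_w(n) \ge \sum_{i \in I} H_w(n-k+i)$.
   Context: Let $\Omega$ be a finite alphabet with $q\ge2$ letters; $w = w_k\dots w_1$. $h_w(n)$: number of strings of length $n$ over $\Omega$ whose last $k$ characters form $w$ and with no other occurrence of $w$ as a block of $k$ consecutive characters ($h_w(n)=0$ for $n<k$). $H_w(n) = q h_w(n-1) - h_w(n)$. Autocorrelation digits: $b_i = 1$ ($1\le i\le k$) iff $w_j = w_{k-i+j}$ for $j=1,\dots,i$. For $1\le i\le k-1$ with $b_i=1$, $[i] = \max\{j\in\{1,\dots,k-1\} : b_j = 1,\ i = k-t(k-j) \text{ for some integer } 1\le t\le\lfloor k/(k-j)\rfloor\}$; $I = \{[i] : 1\le i\le k-1,\ b_i=1\}$ (empty if no such $i$). *)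

From mathcomp Require Import all_boot all_order all_algebra.
Set Implicit Arguments. Unset Strict Implicit. Unset Printing Implicit Defensive.
Import GRing.Theory Num.Theory.

Section Words.
Variable T : finType.

(* The paper writes
   w = w_k ... w_1, so w_j (1 <= j <= k) is the j-th letter from the RIGHT,
   i.e. the entry of index (k - j) of the seq (0-based from the left). *)
Definition letter (w : seq T) (j : nat) : option T :=
  nth None (map Some w) (size w - j).

Definition occurs_at (w s : seq T) (p : nat) : bool :=
  (p + size w <= size s) && (take (size w) (drop p s) == w).

Definition h (w : seq T) (n : nat) : nat :=
  if n < size w then 0 else
  #|[pred s : n.-tuple T |
      [forall p : 'I_(n - size w).+1,
         occurs_at w s p == (val p == n - size w)]]|.

Definition H (w : seq T) (n : nat) : int :=
  (#|T| * h w n.-1)%:Z - (h w n)%:Z.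

Definition b (w : seq T) (i : nat) : bool :=
  (1 <= i <= size w) &&
  [forall j : 'I_i, letter w j.+1 == letter w (size w - i + j.+1)].

Definition rep (w : seq T) (i : nat) : nat :=
  let k := size w in
  \max_(j < k | (0 < val j) && b w j &&
          [exists t : 'I_(k %/ (k - j)).+1, (0 < val t) && (i == k - t * (k - j))])
    val j.

Definition Iset (w : seq T) : seq nat :=
  undup [seq rep w i | i <- iota 1 (size w).-1 & b w i].

End Words.

From mathcomp Require Import all_boot all_order all_algebra.
From mathcomp Require Import zify.
Import GRing.Theory Num.Theory.
Set Implicit Arguments. Unset Strict Implicit. Unset Printing Implicit Defensive.

(* H_w(N) counts the strings of length N that begin and end with w and contain
   no other occurrence of w.  For a period k - i of w (i in I), dropping the
   first k - i letters of such a string of length n - k + i leaves a tail e of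
   length n - k for which the last occurrence of w in w ++ e before position k
   is at k - i.  Different i give disjoint sets of tails.  Among the q strings
   c :: e' sharing a tail e', at most one admits any such proper overlap (a
   Fine-Wilf argument forces the letter c), and since q >= 2 another letter
   gives a string e with no proper overlap at all; prepending w to those e gives
   strings counted by H_w(n). *)

Section Occurrences.
Variables (T : finType) (w : seq T).
Local Notation k := (size w).

Lemma inhabited_of_size (s : seq T) : 0 < size s -> inhabited T.
Proof. by case: s => // x _; exists. Qed.

Lemma occurs_at_cat (x y : seq T) p :
  occurs_at w (x ++ y) (size x + p) = occurs_at w y p.
Proof.
rewrite /occurs_at size_cat drop_cat ltnNge leq_addr /= addKn.
by rewrite -addnA leq_add2l.
Qed.

Lemma occurs_at_behead (s : seq T) p : 0 < k ->
  occurs_at w s p.+1 = occurs_at w (behead s) p.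
Proof.
move=> k_gt0; case: s => [|c s]; last by rewrite -(occurs_at_cat [:: c]).
by rewrite /occurs_at /=; apply/esym/negbTE/nandP; left; lia.
Qed.

Lemma occurs_at_nth (s : seq T) r x0 : occurs_at w s r ->
  forall j, j < k -> nth x0 s (r + j) = nth x0 w j.
Proof.
move=> /andP [_ /eqP take_s] j lt_jk.
by rewrite -nth_drop -(nth_take _ lt_jk) take_s.
Qed.

Lemma occurs_at_prefix (e : seq T) : occurs_at w (w ++ e) 0.
Proof. by rewrite /occurs_at drop0 take_size_cat // size_cat leq_addr eqxx. Qed.

Lemma occurs_at_out (s : seq T) p : size s - k < p -> occurs_at w s p = false.
Proof. by move=> lt_p; apply/negbTE/nandP; left; lia. Qed.

Definition only_at_end (s : seq T) : bool :=
  [forall p : 'I_(size s).+1, occurs_at w s p == (val p == size s - k)].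

Lemma only_at_endP s : k <= size s ->
  reflect (forall p, occurs_at w s p = (p == size s - k)) (only_at_end s).
Proof.
move=> le_ks; apply: (iffP forallP) => occ p; last by rewrite occ.
have [lt_p | ge_p] := ltnP p (size s).+1; first by have /eqP := occ (Ordinal lt_p).
by rewrite occurs_at_out; [symmetry; apply/eqP|]; lia.
Qed.

Lemma only_at_end_cons c (t : seq T) : 0 < k -> k <= size t ->
  only_at_end (c :: t) = only_at_end t && ~~ occurs_at w (c :: t) 0.
Proof.
move=> k_gt0 le_kt; have le_kct : k <= size (c :: t) by rewrite /=; lia.
apply/(only_at_endP le_kct)/andP => [occ | [/(only_at_endP le_kt) occ nocc0]].
  split; last by rewrite occ; apply/eqP => /=; lia.
  apply/(only_at_endP le_kt) => p.
  by rewrite -(occurs_at_behead (c :: t)) // occ /=; apply/eqP/eqP; lia.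
case=> [|p]; first by rewrite (negbTE nocc0); symmetry; apply/eqP => /=; lia.
by rewrite (occurs_at_behead (c :: t)) // occ /=; apply/eqP/eqP; lia.
Qed.

End Occurrences.

Section TupleCounting.
Variable T : finType.

Lemma card_tuples_sum N (P : pred (seq T)) :
  #|[pred t : N.-tuple T | P t]| = \sum_(t : N.-tuple T) P t.
Proof.
rewrite -sum1_card big_mkcond /=; apply: eq_bigr => t _.
by rewrite inE; case: (P t).
Qed.

Lemma sum_tuplesS N (F : seq T -> nat) :
  \sum_(t : N.+1.-tuple T) F t = \sum_(c : T) \sum_(t : N.-tuple T) F (c :: t).
Proof.
rewrite pair_bigA /= (reindex (fun p : T * N.-tuple T => [tuple of p.1 :: p.2])) //=.
exists (fun t : N.+1.-tuple T => (thead t, [tuple of behead t])).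
  by case=> c t _ /=; congr pair; apply: val_inj.
by move=> t _; rewrite [in RHS](tuple_eta t).
Qed.

Lemma card_tuples_le_inj N1 N2 (P1 P2 : pred (seq T)) (f : seq T -> seq T) :
  inhabited T ->
  (forall s, size s = N1 -> P1 s -> size (f s) = N2 /\ P2 (f s)) ->
  (forall s1 s2, size s1 = N1 -> size s2 = N1 -> P1 s1 -> P1 s2 ->
     f s1 = f s2 -> s1 = s2) ->
  #|[pred t : N1.-tuple T | P1 t]| <= #|[pred t : N2.-tuple T | P2 t]|.
Proof.
move=> [x0] f_maps f_inj.
pose g (t : N1.-tuple T) : N2.-tuple T := insubd [tuple of nseq N2 x0] (f t).
have val_g (t : N1.-tuple T) : P1 t -> val (g t) = f t.
  by move=> P1t; rewrite val_insubd; have [-> _] := f_maps t (size_tuple t) P1t; rewrite eqxx.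
rewrite -(card_in_imset (f := g)); last first.
  move=> t1 t2; rewrite !inE => P1t1 P1t2 /(congr1 val); rewrite !val_g // => eq_f.
  by apply: val_inj; apply: f_inj; rewrite ?size_tuple.
apply/subset_leq_card/subsetP => _ /imsetP [t P1t ->].
rewrite inE in P1t; rewrite inE val_g //.
by have [_ ->] := f_maps t (size_tuple t) P1t.
Qed.

End TupleCounting.

Section Framed.
Variables (T : finType) (w : seq T).
Local Notation k := (size w).

Definition framed (a : seq T) : bool := occurs_at w a 0 && only_at_end w (behead a).

Definition n_framed N := #|[pred a : N.-tuple T | framed a]|.

Lemma h_card N : k <= N -> h w N = #|[pred s : N.-tuple T | only_at_end w s]|.
Proof.
move=> le_kN; rewrite /h ltnNge le_kN /=; apply: eq_card => s; rewrite !inE.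
have le_ks : k <= size s by rewrite size_tuple.
apply/forallP/(only_at_endP le_ks) => occ p; last by rewrite occ size_tuple.
rewrite size_tuple; have [lt_p | ge_p] := ltnP p (N - k).+1.
  by have /eqP := occ (Ordinal lt_p).
by rewrite occurs_at_out ?size_tuple; [symmetry; apply/eqP|]; lia.
Qed.

(* Prepending a letter to a string counted by h_w(N) gives one counted by
   h_w(N+1), unless w now also occurs at the front, in which case it is framed. *)
Lemma H_n_framed N : 0 < k -> k < N -> (H w N = (n_framed N)%:Z)%R.
Proof.
move=> k_gt0; case: N => [|N] lt_kN; first by [].
rewrite /H /= !h_card ?(ltnW lt_kN) // /n_framed !card_tuples_sum.
have -> : #|T| * \sum_(t : N.-tuple T) only_at_end w t =
    \sum_(t : N.+1.-tuple T) only_at_end w t + \sum_(t : N.+1.-tuple T) framed t.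
  rewrite (sum_tuplesS _ (nat_of_bool \o only_at_end w)).
  rewrite (sum_tuplesS _ (nat_of_bool \o framed)) -big_split /= -sum_nat_const.
  apply: eq_bigr => c _.
  rewrite -big_split /=; apply: eq_bigr => t _.
  rewrite /framed /= only_at_end_cons ?size_tuple //.
  by case: (only_at_end w t); case: (occurs_at w (c :: t) 0).
by rewrite PoszD addrAC subrr add0r.
Qed.

End Framed.

(* Euclid's algorithm on the pair of shifts (p, d), as in the Fine-Wilf theorem. *)
Lemma two_shifts_eq (U : Type) (g : nat -> U) p d : 0 < p -> 0 < d ->
  (forall i, i < d - 1 -> g i = g (i + p)) ->
  (forall i, i < p - 1 -> g i = g (i + d)) -> g (p - 1) = g (d - 1).
Proof.
move: {2}(p + d) (leqnn (p + d)) => s; elim: s p d g => [|s IH] p d g.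
  by move=> ? ? ?; lia.
move=> le_s p_gt0 d_gt0 shift_p shift_d.
case: (ltngtP p d) => [lt_pd | lt_dp | -> //].
- have -> : g (d - 1) = g (d - p - 1).
    by have := shift_p (d - p - 1) ltac:(lia); rewrite (_ : d - p - 1 + p = d - 1) //; lia.
  apply: (IH p (d - p)); try lia.
    by move=> i lt_i; apply: shift_p; lia.
  move=> i lt_i; rewrite shift_d; last lia.
  by have := shift_p (i + (d - p)) ltac:(lia); rewrite (_ : i + (d - p) + p = i + d) //; lia.
- have -> : g (p - 1) = g (p - d - 1).
    by have := shift_d (p - d - 1) ltac:(lia); rewrite (_ : p - d - 1 + d = p - 1) //; lia.
  apply: (IH (p - d) d); try lia.
    move=> i lt_i; rewrite shift_p; last lia.
    by have := shift_d (i + (p - d)) ltac:(lia); rewrite (_ : i + (p - d) + d = i + p) //; lia.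
  by move=> i lt_i; apply: shift_d; lia.
Qed.

Section Overlaps.
Variables (T : finType) (w : seq T).
Local Notation k := (size w).

Lemma overlap_nth (c : T) (e : seq T) r x0 :
  occurs_at w (w ++ c :: e) r -> 0 < r <= k ->
  [/\ c = nth x0 w (k - r),
      forall j, r + j < k -> nth x0 w (r + j) = nth x0 w j &
      forall t, 0 < t < r -> nth x0 e t.-1 = nth x0 w (k - r + t)].
Proof.
move=> occ_r /andP [r_gt0 le_rk]; have occ := occurs_at_nth x0 occ_r.
split.
- have := occ (k - r) ltac:(lia); rewrite (_ : r + (k - r) = k); last lia.
  by rewrite nth_cat ltnn subnn.
- by move=> j lt_j; have := occ j ltac:(lia); rewrite nth_cat lt_j.
- move=> t /andP [t_gt0 lt_tr]; have := occ (k - r + t) ltac:(lia).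
  rewrite (_ : r + (k - r + t) = k + t); last lia.
  by rewrite nth_cat ltnNge leq_addr /= addKn; case: t t_gt0 {lt_tr}.
Qed.

(* The two overlaps give w the shifts r and r' - r on a window long enough,
   thanks to the common tail e, for the Fine-Wilf argument. *)
Lemma overlap_letter_uniq (c c' : T) (e : seq T) r r' :
  0 < r <= k -> 0 < r' <= k ->
  occurs_at w (w ++ c :: e) r -> occurs_at w (w ++ c' :: e) r' -> c = c'.
Proof.
wlog le_rr' : c c' r r' / r <= r'.
  move=> W r_in r'_in occ occ'; have [le | lt] := leqP r r'; first exact: (W c c' r r').
  by symmetry; apply: (W c' c r' r) => //; lia.
move=> r_in r'_in occ occ'.
have [def_c per_r tail_r] := overlap_nth c occ r_in.
have [def_c' _ tail_r'] := overlap_nth c occ' r'_in.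
rewrite def_c def_c'.
case: (ltngtP r r') => [lt_rr' | | -> //]; last lia.
have -> : nth c w (k - r) = nth c w (k - (r' - r)).
  have := @two_shifts_eq _ (fun j => nth c w (k - 1 - j)) r (r' - r) ltac:(lia) ltac:(lia).
  rewrite (_ : k - 1 - (r - 1) = k - r); last lia.
  rewrite (_ : k - 1 - (r' - r - 1) = k - (r' - r)); last lia.
  apply=> i lt_i /=.
    have := per_r (k - 1 - (i + r)) ltac:(lia).
    by rewrite (_ : r + (k - 1 - (i + r)) = k - 1 - i); last lia.
  rewrite -(_ : k - r + (r - 1 - i) = k - 1 - i); last lia.
  rewrite -tail_r ?tail_r'; try lia.
  by rewrite (_ : k - r' + (r - 1 - i) = k - 1 - (i + (r' - r))); last lia.
have := per_r (k - r') ltac:(lia).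
by rewrite (_ : r + (k - r') = k - (r' - r)); last lia.
Qed.

End Overlaps.

Section LastOverlap.
Variables (T : finType) (w : seq T).
Local Notation k := (size w).

Definition last_overlap r (e : seq T) : bool :=
  [&& only_at_end w e, occurs_at w (w ++ e) r &
      [forall r' : 'I_k, (r < r') ==> ~~ occurs_at w (w ++ e) r']].

Definition n_last_overlap r m := #|[pred e : m.-tuple T | last_overlap r e]|.

Lemma last_overlap_uniq r r' e : r < k -> r' < k ->
  last_overlap r e -> last_overlap r' e -> r = r'.
Proof.
move=> lt_rk lt_r'k /and3P [_ occ_r /forallP last_r] /and3P [_ occ_r' /forallP last_r'].
case: (ltngtP r r') => // [lt_rr' | lt_r'r].
  by have := last_r (Ordinal lt_r'k); rewrite /= lt_rr' occ_r'.
by have := last_r' (Ordinal lt_rk); rewrite /= lt_r'r occ_r.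
Qed.

(* Cutting the first k - r letters of a framed string s of length n - r leaves
   a string e with w ++ e = take r w ++ s, since r is a period of w. *)
Lemma n_framed_le_last_overlap r n :
  0 < r < k -> drop r w = take (k - r) w -> 2 * k <= n ->
  n_framed w (n - r) <= n_last_overlap r (n - k).
Proof.
move=> /andP [r_gt0 lt_rk] per_r le_2k_n.
apply: (card_tuples_le_inj (f := drop (k - r))) => [|s size_s | s1 s2 _ _].
  by apply: (@inhabited_of_size _ w); lia.
  case/andP=> occ0_s /only_at_endP occ_behead_s.
  have /andP [_ /eqP] := occ0_s; rewrite drop0 => take_s.
  have {}occ_behead_s := occ_behead_s ltac:(rewrite size_behead; lia).
  set e := drop (k - r) s.
  have w_e : w ++ e = take r w ++ s.
    rewrite -(cat_take_drop (k - r) s) catA; congr (_ ++ _).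
    by rewrite -(take_takel _ (leq_subr r k)) take_s -per_r cat_take_drop.
  have occ_shift p : occurs_at w (w ++ e) (r + p) = occurs_at w s p.
    by rewrite w_e -(occurs_at_cat _ (take r w) s p) size_takel //; lia.
  have occ_s p : 0 < p -> occurs_at w s p = (p == n - r - k).
    case: p => [|p] // _; rewrite (occurs_at_behead s) ?occ_behead_s; last lia.
    by rewrite size_behead size_s; apply/eqP/eqP; lia.
  have size_e : size e = n - k by rewrite size_drop size_s; lia.
  split=> //; apply/and3P; split.
  - apply/only_at_endP => [|p]; first lia.
    rewrite -(occurs_at_cat w w e p) (_ : k + p = r + (k - r + p)); last lia.
    by rewrite occ_shift occ_s; [rewrite size_e; apply/eqP/eqP|]; lia.
  - by rewrite -(addn0 r) occ_shift.
  - apply/forallP => r'; apply/implyP => lt_rr'; have lt_r'k := ltn_ord r'.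
    rewrite (_ : nat_of_ord r' = r + (r' - r)); last lia.
    by rewrite occ_shift occ_s; [apply/negP => /eqP|]; lia.
case/andP=> /andP [_ /eqP]; rewrite drop0 => take_s1 _.
case/andP=> /andP [_ /eqP]; rewrite drop0 => take_s2 _ eq_drop.
rewrite -(cat_take_drop (k - r) s1) -(cat_take_drop (k - r) s2) eq_drop.
by rewrite -(take_takel s1 (leq_subr r k)) take_s1 -(take_takel s2 (leq_subr r k)) take_s2.
Qed.

Lemma last_overlap0_le_n_framed n : 0 < k -> 2 * k < n ->
  n_last_overlap 0 (n - k) <= n_framed w n.
Proof.
move=> k_gt0 lt_2k_n.
apply: (card_tuples_le_inj (f := cat w)) => [|e size_e | s1 s2 _ _ _ _].
  exact: inhabited_of_size k_gt0.
  case/and3P=> /only_at_endP occ_e _ /forallP last_0.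
  split; first by rewrite size_cat size_e; lia.
  apply/andP; split; first exact: occurs_at_prefix.
  apply/only_at_endP => [|p]; first by rewrite size_behead size_cat; lia.
  rewrite -occurs_at_behead // size_behead size_cat size_e.
  have [lt_pk | le_kp] := ltnP p.+1 k.
    by have /negbTE -> := last_0 (Ordinal lt_pk); symmetry; apply/eqP; lia.
  rewrite (_ : p.+1 = k + (p.+1 - k)); last lia.
  by rewrite occurs_at_cat occ_e size_e; [apply/eqP/eqP|]; lia.
by move/(congr1 (drop k)); rewrite !drop_size_cat.
Qed.

End LastOverlap.

Section ProperOverlaps.
Variables (T : finType) (w : seq T).
Local Notation k := (size w).

Definition has_proper_overlap (e : seq T) : bool :=
  [exists r : 'I_k, (0 < r) && last_overlap w r e].

Lemma sum_last_overlap_le (ls : seq nat) e : uniq ls ->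
  {in ls, forall i, 0 < i < k} ->
  \sum_(i <- ls) last_overlap w (k - i) e <= has_proper_overlap e.
Proof.
move=> uniq_ls ls_in.
have [[i0 i0_ls last_i0] | none] := altP (@hasP _ (fun i => last_overlap w (k - i) e) ls).
  have i0_in := ls_in _ i0_ls; have lt_k_i0 : k - i0 < k by lia.
  have -> : has_proper_overlap e.
    by apply/existsP; exists (Ordinal lt_k_i0); rewrite /= last_i0 andbT; lia.
  apply: (leq_trans (n := \sum_(i <- ls) (i == i0))).
    rewrite big_seq [leqRHS]big_seq; apply: leq_sum => i i_ls.
    case last_i: (last_overlap w (k - i) e) => //.
    have i_in := ls_in _ i_ls; have lt_k_i : k - i < k by lia.
    have := last_overlap_uniq lt_k_i lt_k_i0 last_i last_i0.
    by move=> eq_k; rewrite (_ : i = i0) ?eqxx //; lia.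
  by rewrite -big_mkcond sum1_count count_uniq_mem // leq_b1.
rewrite big1_seq // => i i_ls.
by move/hasPn: none => /(_ i i_ls) /negbTE ->.
Qed.

(* At most one letter c gives c :: e a proper overlap (Fine-Wilf forces it),
   and since q >= 2 some other letter gives a last overlap at 0. *)
Lemma sum_proper_overlap_le (e : seq T) : 0 < k -> k <= size e -> 1 < #|T| ->
  \sum_(c : T) has_proper_overlap (c :: e) <= \sum_(c : T) last_overlap w 0 (c :: e).
Proof.
move=> k_gt0 le_ke card_T.
case: (boolP [exists c, has_proper_overlap (c :: e)]) => [|/existsPn none]; last first.
  by rewrite big1 // => c _; rewrite (negbTE (none c)).
case/existsP=> c0 /existsP [r0 /andP [r0_gt0 last_r0]].
have occ_r0 : occurs_at w (w ++ c0 :: e) r0 by case/and3P: last_r0.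
have forced c r : 0 < r <= k -> occurs_at w (w ++ c :: e) r -> c = c0.
  by move=> r_in occ; apply: overlap_letter_uniq r_in _ occ occ_r0; rewrite r0_gt0 ltnW.
have at_most_one : \sum_(c : T) has_proper_overlap (c :: e) <= 1.
  rewrite (bigD1 c0) //= big1 ?addn0 ?leq_b1 // => c ne_c_c0.
  case/boolP: (has_proper_overlap (c :: e)) => // /existsP [r /andP [r_gt0 /and3P [_ occ _]]].
  by move: ne_c_c0; rewrite (forced c r) ?eqxx // r_gt0 ltnW.
apply: (leq_trans at_most_one).
have [c ne_c_c0] : exists c, c != c0.
  case/card_gt1P: card_T => x [y [_ _ ne_xy]].
  by case: (eqVneq x c0) => [eq_x | ne_x]; [exists y; rewrite -eq_x eq_sym | exists x].
rewrite (bigD1 c) //=; suff -> : last_overlap w 0 (c :: e) by [].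
have /and3P [end_c0e _ _] := last_r0.
rewrite only_at_end_cons // in end_c0e; case/andP: end_c0e => end_e _.
apply/and3P; split; [|exact: occurs_at_prefix|].
- rewrite only_at_end_cons // end_e /=; apply/negP => occ0.
  move: occ0; rewrite -(occurs_at_cat w w (c :: e) 0) addn0 => occ_k.
  by move: ne_c_c0; rewrite (forced c k) ?eqxx ?k_gt0 ?leqnn.
- apply/forallP => r; apply/implyP => r_gt0; apply/negP => occ_r.
  by move: ne_c_c0; rewrite (forced c r) ?eqxx // r_gt0 ltnW.
Qed.

Lemma sum_n_last_overlap_le (ls : seq nat) m : 0 < k -> k < m -> 1 < #|T| ->
  uniq ls -> {in ls, forall i, 0 < i < k} ->
  \sum_(i <- ls) n_last_overlap w (k - i) m <= n_last_overlap w 0 m.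
Proof.
move=> k_gt0 lt_km card_T uniq_ls ls_in.
rewrite /n_last_overlap card_tuples_sum.
under eq_bigr do rewrite card_tuples_sum.
rewrite exchange_big /=.
apply: (leq_trans (n := \sum_(e : m.-tuple T) has_proper_overlap e)).
  by apply: leq_sum => e _; apply: sum_last_overlap_le.
case: m lt_km => [|m] lt_km; first by [].
rewrite (sum_tuplesS _ (nat_of_bool \o has_proper_overlap)).
rewrite (sum_tuplesS _ (nat_of_bool \o last_overlap w 0)).
rewrite exchange_big [leqRHS]exchange_big /=.
by apply: leq_sum => e _; apply: sum_proper_overlap_le; rewrite ?size_tuple.
Qed.

End ProperOverlaps.

Lemma bigmax_val_prop n (P : pred 'I_n) (Q : nat -> Prop) :
  (exists j, P j) -> (forall j, P j -> Q j) -> Q (\max_(j | P j) val j).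
Proof.
move=> [j P_j] Q_P.
have [j0 P_j0 ->] := @eq_bigmax_cond _ P val (ltac:(by apply/card_gt0P; exists j)).
exact: Q_P.
Qed.

Section Autocorrelation.
Variables (T : finType) (w : seq T).
Local Notation k := (size w).

Lemma b_period i : 0 < i < k -> b w i -> drop (k - i) w = take i w.
Proof.
move=> i_in /andP [_ /forallP match_i].
have [x0] : inhabited T by apply: (@inhabited_of_size _ w); lia.
apply: (@eq_from_nth _ x0) => [|t]; first by rewrite size_drop size_takel; lia.
rewrite size_drop => lt_t; rewrite nth_drop nth_take; last lia.
have := match_i (@Ordinal i (i - 1 - t) ltac:(lia)); rewrite /letter /=.
rewrite (_ : k - (i - 1 - t).+1 = k - i + t); last lia.
rewrite (_ : k - (k - i + (i - 1 - t).+1) = t); last lia.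
by rewrite !(nth_map x0); [case/eqP | lia..].
Qed.

Lemma mem_Iset i : 0 < k -> i \in Iset w -> 0 < i < k /\ b w i.
Proof.
move=> k_gt0; rewrite /Iset mem_undup => /mapP [i0].
rewrite mem_filter mem_iota => /andP [b_i0 i0_in] ->.
apply: (bigmax_val_prop (Q := fun j => 0 < j < k /\ b w j)).
  exists (@Ordinal k i0 ltac:(lia)); rewrite /= b_i0 andbT.
  apply/andP; split; first lia.
  apply/existsP; exists (@Ordinal (k %/ (k - i0)).+1 1 ltac:(rewrite ltnS divn_gt0; lia)) => /=.
  by apply/eqP; lia.
by move=> j /andP [/andP [j_gt0 b_j] _]; rewrite j_gt0 ltn_ord.
Qed.

End Autocorrelation.

Unset Implicit Arguments.
Local Open Scope ring_scope.

Theorem corollary4p5 (T : finType) (w : seq T) (n : nat) :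
  (1 < #|T|)%N -> (0 < size w)%N -> (2 * size w < n)%N ->
  \sum_(i <- Iset w) H w (n - size w + i) <= H w n.
Proof.
move=> card_T k_gt0 lt_2k_n; set k := size w.
have Iset_in i : i \in Iset w -> (0 < i < k)%N by case/mem_Iset.
have -> : \sum_(i <- Iset w) H w (n - k + i) =
          (\sum_(i <- Iset w) n_framed w (n - (k - i)))%N%:Z.
  rewrite (big_morph _ PoszD (erefl 0%:Z)) !big_seq; apply: eq_bigr => i /Iset_in i_in.
  by rewrite H_n_framed // (_ : (n - k + i = n - (k - i))%N); lia.
rewrite H_n_framed ?lez_nat //; last lia.
apply: leq_trans (last_overlap0_le_n_framed k_gt0 lt_2k_n).
apply: (leq_trans (n := \sum_(i <- Iset w) n_last_overlap w (k - i) (n - k))).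
  rewrite !big_seq; apply: leq_sum => i i_Iset; have [i_in b_i] := mem_Iset k_gt0 i_Iset.
  apply: n_framed_le_last_overlap; [lia | | lia].
  by rewrite subKn ?b_period //; lia.
by apply: sum_n_last_overlap_le => //; [lia | exact: undup_uniq].
Qed.
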